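(* Let $P\neq Q$ be points in $\mathbb{R}^3$ and let $\gamma:[0,T)\times[0,1]\to\mathbb{R}^3$ be a sufficiently smooth family of curves with $|\gamma_u|_g\neq0$ everywhere, $\gamma(0,\cdot)$ a regular horizontal curve from $P$ to $Q$, $\gamma(t,0)=P$, $\gamma(t,1)=Q$ for all $t$, and $$\gamma_t(t,u)=\vec k_g(t,u)+\lambda(t)N(t,u)-\Big(\int_0^u(k(t,\xi)+\lambda(t))|\gamma_u(t,\xi)|_gd\xi\Big)X_3(\gamma(t,u))$$ for $(t,u)\in(0,T)\times(0,1)$, where $\lambda(t)=-\frac{\int_0^1k(t,u)|\gamma_u(t,u)|_gdu}{L(\gamma(t))}$. Then $t\mapsto L(\gamma(t))$ is nonincreasing.
   Context: Write $\gamma=(\gamma^1,\gamma^2,\gamma^3)^t$. $|\gamma_u|_g=\sqrt{(\gamma^1_u)^2+(\gamma^2_u)^2}$ and $L(\gamma)=\int_0^1|\gamma_u|_gdu$. A curve is horizontal if $\gamma^3_u=-\tfrac12\gamma^2\gamma^1_u+\tfrac12\gamma^1\gamma^2_u$. $X_3=(0,0,1)^t$. $k=\frac{\gamma^2_{uu}\gamma^1_u-\gamma^2_u\gamma^1_{uu}}{((\gamma^1_u)^2+(\gamma^2_u)^2)^{3/2}}$, $N=\frac1{|\gamma_u|_g}\big(-\gamma^2_u,\ \gamma^1_u,\ \tfrac12\gamma^2\gamma^2_u+\tfrac12\gamma^1\gamma^1_u\big)^t$, and $\vec k_g=kN$. *)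

From Stdlib Require Import Reals.
From Coquelicot Require Import Coquelicot.
Open Scope R_scope.

(* Points of R^3 as triples; a family of curves is gamma : R -> R -> R^3,
   gamma t u with t the time and u in [0,1] the curve parameter. *)
Definition pt3 := (R * R * R)%type.
Definition c1 (x : pt3) : R := fst (fst x).
Definition c2 (x : pt3) : R := snd (fst x).
Definition c3 (x : pt3) : R := snd x.

Definition vadd (x y : pt3) : pt3 := (c1 x + c1 y, c2 x + c2 y, c3 x + c3 y).
Definition vsub (x y : pt3) : pt3 := (c1 x - c1 y, c2 x - c2 y, c3 x - c3 y).
Definition vscal (a : R) (x : pt3) : pt3 := (a * c1 x, a * c2 x, a * c3 x).

Definition X3 (x : pt3) : pt3 := (0, 0, 1).

Definition dt (f : R -> R -> R) (t u : R) : R := Derive (fun s => f s u) t.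
Definition du (f : R -> R -> R) (t u : R) : R := Derive (fun v => f t v) u.

Definition C2_at (f : R -> R -> R) (t u : R) : Prop :=
  locally (t, u) (fun p : R * R =>
     ex_derive (fun s => f s (snd p)) (fst p) /\
     ex_derive (fun v => f (fst p) v) (snd p) /\
     ex_derive (fun s => dt f s (snd p)) (fst p) /\
     ex_derive (fun v => dt f (fst p) v) (snd p) /\
     ex_derive (fun s => du f s (snd p)) (fst p) /\
     ex_derive (fun v => du f (fst p) v) (snd p)) /\
  continuous (fun p : R * R => f (fst p) (snd p)) (t, u) /\
  continuous (fun p : R * R => dt f (fst p) (snd p)) (t, u) /\
  continuous (fun p : R * R => du f (fst p) (snd p)) (t, u) /\
  continuous (fun p : R * R => dt (dt f) (fst p) (snd p)) (t, u) /\
  continuous (fun p : R * R => du (dt f) (fst p) (snd p)) (t, u) /\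
  continuous (fun p : R * R => dt (du f) (fst p) (snd p)) (t, u) /\
  continuous (fun p : R * R => du (du f) (fst p) (snd p)) (t, u).

Section Geom.
Variable gamma : R -> R -> pt3.

Definition g1 (t u : R) : R := c1 (gamma t u).
Definition g2 (t u : R) : R := c2 (gamma t u).
Definition g3 (t u : R) : R := c3 (gamma t u).

Definition gamma_t (t u : R) : pt3 := (dt g1 t u, dt g2 t u, dt g3 t u).

Definition norm_gu (t u : R) : R := sqrt ((du g1 t u) ^ 2 + (du g2 t u) ^ 2).

Definition Len (t : R) : R := RInt (fun u => norm_gu t u) 0 1.

Definition horizontal_at (t u : R) : Prop :=
  du g3 t u = - / 2 * g2 t u * du g1 t u + / 2 * g1 t u * du g2 t u.

Definition curv (t u : R) : R :=
  (du (du g2) t u * du g1 t u - du g2 t u * du (du g1) t u) /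
  Rpower ((du g1 t u) ^ 2 + (du g2 t u) ^ 2) (3 / 2).

Definition Nrm (t u : R) : pt3 :=
  vscal (/ norm_gu t u)
    (- du g2 t u, du g1 t u,
     / 2 * g2 t u * du g2 t u + / 2 * g1 t u * du g1 t u).

Definition lam (t : R) : R :=
  - (RInt (fun u => curv t u * norm_gu t u) 0 1) / Len t.

End Geom.

From Pilot Require Import Defs.
From Stdlib Require Import Reals Lra.
From Coquelicot Require Import Coquelicot.
Open Scope R_scope.

(* Differentiating under the integral sign, L' = int_0^1 d/dt |gamma_u|_g.  With
   tau = (gamma^1_u, gamma^2_u) / |gamma_u|_g and <.,.> the Euclidean product of the
   first two components,
     d/dt |gamma_u|_g = d/du <gamma_t, tau> - <gamma_t, d/du tau>.
   The first term integrates to 0 because the endpoints are fixed.  Moreover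
   d/du tau = k |gamma_u|_g nu, where nu is the horizontal part of N, and the flow
   gives gamma_t the horizontal part (k + lambda) nu.  Hence
     L' = - int (k + lambda) k |gamma_u|_g = - int (k + lambda)^2 |gamma_u|_g <= 0,
   the middle equality being exactly the choice of lambda.  The mean value theorem
   gives monotonicity on (0,T), and continuity of L at 0 extends it to [0,T).
   Neither horizontality of gamma(0,.) nor P <> Q is needed. *)

Section RealContinuity.
Context {U : UniformSpace}.
Implicit Types (f : U -> R) (x : U).

Lemma continuous_Rinv_fun f x :
  continuous f x -> f x <> 0 -> continuous (fun y => / f y) x.
Proof.
  intros cf fx0. apply (continuous_comp f Rinv x cf). now apply continuous_Rinv.
Qed.

Lemma continuous_sqrt_fun f x : continuous f x -> continuous (fun y => sqrt (f y)) x.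
Proof. intros cf. apply (continuous_comp f sqrt x cf), continuous_sqrt. Qed.

Lemma continuous_pow_fun f x n : continuous f x -> continuous (fun y => f y ^ n) x.
Proof.
  intros cf. induction n as [|n IHn]; simpl.
  - apply continuous_const.
  - now apply (continuous_mult (K := R_AbsRing)).
Qed.

Lemma locally_pos_of_continuous f x :
  continuous f x -> 0 < f x -> locally x (fun y => 0 < f y).
Proof.
  intros cf fx_pos. apply (cf (fun r => 0 < r)).
  exists (mkposreal _ fx_pos). intros y Hy.
  change (Rabs (y - f x) < f x) in Hy. apply Rabs_def2 in Hy. lra.
Qed.

End RealContinuity.

Ltac continuity_split :=
  repeat match goal with
  | |- continuous (fun _ => _ + _) _ => apply (continuous_plus (V := R_NormedModule))
  | |- continuous (fun _ => _ - _) _ => apply (continuous_minus (V := R_NormedModule))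
  | |- continuous (fun _ => _ * _) _ => apply (continuous_mult (K := R_AbsRing))
  | |- continuous (fun _ => - _) _ => apply (continuous_opp (V := R_NormedModule))
  | |- continuous (fun _ => / _) _ => apply continuous_Rinv_fun
  | |- continuous (fun _ => _ ^ _) _ => apply continuous_pow_fun
  | |- continuous (fun _ => ?c) _ => apply continuous_const
  end.

Definition continuous2 (F : R -> R -> R) (t u : R) : Prop :=
  continuous (fun p : R * R => F (fst p) (snd p)) (t, u).

Lemma continuous2_snd F t u : continuous2 F t u -> continuous (F t) u.
Proof.
  intros cF. apply (continuous_comp_2 (fun _ : R => t) (fun v : R => v) F u); trivial.
  - apply continuous_const.
  - apply continuous_id.
Qed.

Lemma locally_open_interval a b t : a < t < b -> locally t (fun s => a < s < b).
Proof.
  intros ht. assert (d_pos : 0 < Rmin (t - a) (b - t)) by (apply Rmin_glb_lt; lra).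
  exists (mkposreal _ d_pos). intros s Hs.
  change (Rabs (s - t) < Rmin (t - a) (b - t)) in Hs. apply Rabs_def2 in Hs.
  pose proof (Rmin_l (t - a) (b - t)). pose proof (Rmin_r (t - a) (b - t)). lra.
Qed.

Lemma C2_at_continuous2 f t u : C2_at f t u ->
  continuous2 f t u /\ continuous2 (dt f) t u /\ continuous2 (du f) t u /\
  continuous2 (dt (dt f)) t u /\ continuous2 (du (dt f)) t u /\
  continuous2 (dt (du f)) t u /\ continuous2 (du (du f)) t u.
Proof. intros [_ H]. exact H. Qed.

Lemma C2_at_ex_derive f t u : C2_at f t u ->
  ex_derive (fun s => f s u) t /\ ex_derive (fun v => f t v) u /\
  ex_derive (fun s => dt f s u) t /\ ex_derive (fun v => dt f t v) u /\
  ex_derive (fun s => du f s u) t /\ ex_derive (fun v => du f t v) u.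
Proof. intros [H _]. exact (locally_singleton _ _ H). Qed.

Lemma C2_at_dt_du f t u : C2_at f t u -> dt (du f) t u = du (dt f) t u.
Proof.
  intros f_C2. destruct (C2_at_continuous2 f t u f_C2) as (_ & _ & _ & _ & c_tu & c_ut & _).
  destruct f_C2 as [near_tu _]. apply Schwarz.
  - apply locally_2d_locally. revert near_tu. apply filter_imp.
    intros [s v] (? & ? & ? & ? & ? & ?). simpl. tauto.
  - now apply continuity_2d_pt_filterlim.
  - now apply continuity_2d_pt_filterlim.
Qed.

Lemma dt_eq0_of_locally_const f t u c :
  locally t (fun s => f s u = c) -> dt f t u = 0.
Proof.
  intros f_cst. unfold dt. rewrite (Derive_ext_loc _ (fun _ => c)) by exact f_cst.
  apply Derive_const.
Qed.

Lemma nonincreasing_of_derive_nonpos (f df : R -> R) a b :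
  (forall t, a < t < b -> is_derive f t (df t)) ->
  (forall t, a < t < b -> df t <= 0) ->
  forall t1 t2, a < t1 -> t1 <= t2 -> t2 < b -> f t2 <= f t1.
Proof.
  intros f_df df_le0 t1 t2 ht1 ht12 ht2.
  destruct (MVT_gen f t1 t2 df) as (c & hc & f_diff);
    rewrite ?Rmin_left, ?Rmax_right in * by lra.
  - intros x hx. apply f_df. lra.
  - intros x hx. apply continuity_pt_filterlim.
    apply (ex_derive_continuous (K := R_AbsRing) (V := R_NormedModule)).
    exists (df x). apply f_df. lra.
  - assert (df c * (t2 - t1) <= 0) by (apply Rmult_le_0_r; [apply df_le0|]; lra).
    lra.
Qed.

Lemma nonincreasing_right_closed (f : R -> R) a b :
  (forall t1 t2, a < t1 -> t1 <= t2 -> t2 < b -> f t2 <= f t1) ->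
  (forall eps : posreal, exists d : posreal,
     forall s, a <= s <= a + d -> s < b -> Rabs (f s - f a) <= eps) ->
  forall t1 t2, a <= t1 -> t1 <= t2 -> t2 < b -> f t2 <= f t1.
Proof.
  intros f_noninc f_right t1 t2 ht1 ht12 ht2.
  destruct (Rle_lt_or_eq_dec a t1 ht1) as [at1 | <-]; [now apply f_noninc |].
  destruct (Rle_lt_or_eq_dec a t2 ht12) as [at2 | <-]; [| apply Rle_refl].
  apply Rnot_lt_le. intros f_lt.
  assert (eps_pos : 0 < (f t2 - f a) / 2) by lra.
  destruct (f_right (mkposreal _ eps_pos)) as [d f_close].
  pose proof (cond_pos d) as d_pos.
  pose proof (Rmin_l d (t2 - a)). pose proof (Rmin_r d (t2 - a)).
  assert (0 < Rmin d (t2 - a)) by (apply Rmin_glb_lt; lra).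
  set (s := a + Rmin d (t2 - a) / 2).
  assert (hs : Rabs (f s - f a) <= (f t2 - f a) / 2) by (apply f_close; unfold s; lra).
  apply Rabs_le_between in hs.
  assert (f t2 <= f s) by (apply f_noninc; unfold s; lra).
  lra.
Qed.

Lemma ex_RInt_01 (f : R -> R) :
  (forall u, 0 <= u <= 1 -> continuous f u) -> ex_RInt f 0 1.
Proof.
  intros cf. apply (ex_RInt_continuous (V := R_CompleteNormedModule)).
  rewrite Rmin_left, Rmax_right by lra. exact cf.
Qed.

Lemma RInt_param_close (f : R -> R -> R) a b c :
  a <= b -> (forall x, a <= x <= b -> continuous2 f c x) ->
  forall eps : posreal, exists d : posreal, forall s,
    Rabs (s - c) <= d -> ex_RInt (f s) a b -> ex_RInt (f c) a b ->
    Rabs (RInt (f s) a b - RInt (f c) a b) <= (b - a) * eps.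
Proof.
  intros hab f_cont eps.
  destruct (uniform_continuity_2d_1d' f a b c) with (eps := eps) as [d f_unif].
  { intros x hx. now apply continuity_2d_pt_filterlim, f_cont. }
  exists d. intros s hs int_s int_c. apply Rabs_le_between' in hs.
  rewrite <- (RInt_minus (V := R_CompleteNormedModule)) by assumption.
  apply abs_RInt_le_const; [exact hab | now apply (ex_RInt_minus (V := R_CompleteNormedModule)) |].
  intros x hx. left. pose proof (cond_pos d).
  apply f_unif; try lra.
  rewrite Rminus_diag, Rabs_R0. apply cond_pos.
Qed.

(* [l] is the [w]-weighted mean of [- k] (or [0] when [int w = 0], by Rocq's [/ 0 = 0]),
   so [l * (k + l) * w] integrates to [0]. *)
Lemma RInt_weighted_centered (k w : R -> R) a b l :
  ex_RInt (fun u => k u ^ 2 * w u) a b ->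
  ex_RInt (fun u => k u * w u) a b -> ex_RInt w a b ->
  l = - RInt (fun u => k u * w u) a b / RInt w a b ->
  RInt (fun u => (k u + l) * k u * w u) a b =
  RInt (fun u => (k u + l) ^ 2 * w u) a b.
Proof.
  intros int_k2w int_kw int_w l_def.
  apply (RInt_correct (V := R_CompleteNormedModule)) in int_k2w, int_kw, int_w.
  set (I := RInt (fun u => k u ^ 2 * w u) a b) in int_k2w.
  set (J := RInt (fun u => k u * w u) a b) in int_kw, l_def.
  set (W := RInt w a b) in int_w, l_def.
  assert (l_mean : l * (J + l * W) = 0).
  { rewrite l_def. destruct (Req_dec W 0) as [-> | W0].
    - unfold Rdiv. rewrite Rinv_0. ring.
    - field. exact W0. }
  assert (int_lhs : is_RInt (fun u => (k u + l) * k u * w u) a b (I + l * J)).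
  { eapply is_RInt_ext;
      [| exact (is_RInt_plus _ _ _ _ _ _ int_k2w (is_RInt_scal _ _ _ l _ int_kw))].
    intros x _. unfold plus, scal. simpl. unfold mult. simpl. ring. }
  assert (int_rhs : is_RInt (fun u => (k u + l) ^ 2 * w u) a b
                      (I + l * J + l * (J + l * W))).
  { eapply is_RInt_ext;
      [| exact (is_RInt_plus _ _ _ _ _ _ int_lhs
                 (is_RInt_scal _ _ _ l _ (is_RInt_plus _ _ _ _ _ _ int_kw
                                           (is_RInt_scal _ _ _ l _ int_w))))].
    intros x _. unfold plus, scal. simpl. unfold mult. simpl. ring. }
  rewrite (is_RInt_unique _ _ _ _ int_lhs), (is_RInt_unique _ _ _ _ int_rhs), l_mean.
  symmetry. apply Rplus_0_r.
Qed.

Section Curve.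
Variable gamma : R -> R -> pt3.

Lemma norm_gu_pos t u : norm_gu gamma t u <> 0 -> 0 < norm_gu gamma t u.
Proof.
  pose proof (sqrt_pos (du (g1 gamma) t u ^ 2 + du (g2 gamma) t u ^ 2)).
  unfold norm_gu in *. lra.
Qed.

Lemma norm_gu_sqr t u :
  norm_gu gamma t u ^ 2 = du (g1 gamma) t u ^ 2 + du (g2 gamma) t u ^ 2.
Proof. apply pow2_sqrt. nra. Qed.

Lemma sum_sq_du_pos t u :
  norm_gu gamma t u <> 0 -> 0 < du (g1 gamma) t u ^ 2 + du (g2 gamma) t u ^ 2.
Proof. intros Hn. rewrite <- norm_gu_sqr. apply pow_lt, norm_gu_pos, Hn. Qed.

Definition norm_gu_t (t u : R) : R :=
  (du (g1 gamma) t u * dt (du (g1 gamma)) t u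
   + du (g2 gamma) t u * dt (du (g2 gamma)) t u) / norm_gu gamma t u.

Lemma is_derive_norm_gu_t t u :
  ex_derive (fun s => du (g1 gamma) s u) t -> ex_derive (fun s => du (g2 gamma) s u) t ->
  norm_gu gamma t u <> 0 ->
  is_derive (fun s => norm_gu gamma s u) t (norm_gu_t t u).
Proof.
  intros d1 d2 Hn. pose proof (sum_sq_du_pos t u Hn) as Hsq.
  unfold norm_gu_t, norm_gu, dt. auto_derive; [tauto |].
  unfold norm_gu in Hn.
  replace (du (g1 gamma) t u * (du (g1 gamma) t u * 1)
           + du (g2 gamma) t u * (du (g2 gamma) t u * 1))
    with (du (g1 gamma) t u ^ 2 + du (g2 gamma) t u ^ 2) by ring.
  field. exact Hn.
Qed.

Lemma continuous2_norm_gu t u :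
  C2_at (g1 gamma) t u -> C2_at (g2 gamma) t u -> continuous2 (norm_gu gamma) t u.
Proof.
  intros C1 C2.
  apply C2_at_continuous2 in C1 as (_ & _ & ? & _).
  apply C2_at_continuous2 in C2 as (_ & _ & ? & _).
  apply continuous_sqrt_fun. continuity_split; assumption.
Qed.

Lemma continuous2_norm_gu_t t u :
  C2_at (g1 gamma) t u -> C2_at (g2 gamma) t u -> norm_gu gamma t u <> 0 ->
  continuous2 norm_gu_t t u.
Proof.
  intros C1 C2 Hn. pose proof (continuous2_norm_gu t u C1 C2).
  apply C2_at_continuous2 in C1 as (_ & _ & ? & _ & _ & ? & _).
  apply C2_at_continuous2 in C2 as (_ & _ & ? & _ & _ & ? & _).
  unfold continuous2, norm_gu_t, Rdiv. continuity_split; assumption.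
Qed.

Lemma continuity_2d_pt_Derive_norm_gu t u :
  C2_at (g1 gamma) t u -> C2_at (g2 gamma) t u -> norm_gu gamma t u <> 0 ->
  continuity_2d_pt (fun s v => Derive (fun z => norm_gu gamma z v) s) t u.
Proof.
  intros C1 C2 Hn. apply continuity_2d_pt_filterlim.
  apply (continuous_ext_loc (fun p : R * R => Derive (fun z => norm_gu gamma z (snd p)) (fst p))
           (fun p : R * R => norm_gu_t (fst p) (snd p)) (t, u)).
  2: exact (continuous2_norm_gu_t t u C1 C2 Hn).
  pose proof (locally_pos_of_continuous _ _ (continuous2_norm_gu t u C1 C2)
                (norm_gu_pos t u Hn)) as near_pos.
  destruct C1 as [near1 _], C2 as [near2 _].
  generalize (filter_and _ _ near1 (filter_and _ _ near2 near_pos)).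
  apply filter_imp. intros [s v] ((_ & _ & _ & _ & d1 & _) & (_ & _ & _ & _ & d2 & _) & hpos).
  cbn [fst snd] in *. symmetry. apply is_derive_unique, is_derive_norm_gu_t; try assumption.
  apply Rgt_not_eq, hpos.
Qed.

(* [<gamma_t, tau>] in the notation of the header, and its derivative in [u]. *)
Definition tangential (t u : R) : R :=
  (du (g1 gamma) t u * dt (g1 gamma) t u + du (g2 gamma) t u * dt (g2 gamma) t u)
  / norm_gu gamma t u.

Definition tangential_u (t u : R) : R :=
  (du (du (g1 gamma)) t u * dt (g1 gamma) t u + du (g1 gamma) t u * du (dt (g1 gamma)) t u
   + du (du (g2 gamma)) t u * dt (g2 gamma) t u + du (g2 gamma) t u * du (dt (g2 gamma)) t u)
  / norm_gu gamma t u
  - (du (g1 gamma) t u * dt (g1 gamma) t u + du (g2 gamma) t u * dt (g2 gamma) t u)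
    * (du (g1 gamma) t u * du (du (g1 gamma)) t u + du (g2 gamma) t u * du (du (g2 gamma)) t u)
    / norm_gu gamma t u ^ 3.

Lemma is_derive_tangential t u :
  C2_at (g1 gamma) t u -> C2_at (g2 gamma) t u -> norm_gu gamma t u <> 0 ->
  is_derive (tangential t) u (tangential_u t u).
Proof.
  intros C1 C2 Hn. pose proof (sum_sq_du_pos t u Hn) as Hsq.
  apply C2_at_ex_derive in C1 as (_ & _ & _ & ? & _ & ?).
  apply C2_at_ex_derive in C2 as (_ & _ & _ & ? & _ & ?).
  unfold tangential, tangential_u, norm_gu. unfold norm_gu in Hn.
  auto_derive; [tauto |].
  fold (du (du (g1 gamma)) t u) (du (du (g2 gamma)) t u)
       (du (dt (g1 gamma)) t u) (du (dt (g2 gamma)) t u).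
  replace (du (g1 gamma) t u * (du (g1 gamma) t u * 1)
           + du (g2 gamma) t u * (du (g2 gamma) t u * 1))
    with (du (g1 gamma) t u ^ 2 + du (g2 gamma) t u ^ 2) by ring.
  field. exact Hn.
Qed.

Lemma continuous2_tangential_u t u :
  C2_at (g1 gamma) t u -> C2_at (g2 gamma) t u -> norm_gu gamma t u <> 0 ->
  continuous2 tangential_u t u.
Proof.
  intros C1 C2 Hn. pose proof (continuous2_norm_gu t u C1 C2).
  apply C2_at_continuous2 in C1 as (? & ? & ? & _ & ? & _ & ?).
  apply C2_at_continuous2 in C2 as (? & ? & ? & _ & ? & _ & ?).
  unfold continuous2, tangential_u, Rdiv. continuity_split; try assumption.
  apply pow_nonzero. exact Hn.
Qed.

Lemma curv_eq t u : norm_gu gamma t u <> 0 ->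
  curv gamma t u =
  (du (du (g2 gamma)) t u * du (g1 gamma) t u - du (g2 gamma) t u * du (du (g1 gamma)) t u)
  / norm_gu gamma t u ^ 3.
Proof.
  intros Hn. pose proof (sum_sq_du_pos t u Hn) as Hsq.
  unfold curv. f_equal.
  replace (3 / 2) with (1 + / 2) by field.
  rewrite Rpower_plus, Rpower_1, Rpower_sqrt by exact Hsq.
  fold (norm_gu gamma t u). rewrite <- norm_gu_sqr. ring.
Qed.

Lemma continuous_curv t u :
  C2_at (g1 gamma) t u -> C2_at (g2 gamma) t u -> norm_gu gamma t u <> 0 ->
  continuous (curv gamma t) u.
Proof.
  intros C1 C2 Hn.
  pose proof (continuous2_snd _ _ _ (continuous2_norm_gu t u C1 C2)) as cn.
  pose proof (locally_pos_of_continuous _ _ cn (norm_gu_pos t u Hn)) as near_pos.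
  apply C2_at_continuous2 in C1 as (_ & _ & ? & _ & _ & _ & ?).
  apply C2_at_continuous2 in C2 as (_ & _ & ? & _ & _ & _ & ?).
  apply (continuous_ext_loc _ (fun v =>
    (du (du (g2 gamma)) t v * du (g1 gamma) t v - du (g2 gamma) t v * du (du (g1 gamma)) t v)
    / norm_gu gamma t v ^ 3)).
  - revert near_pos. apply filter_imp. intros v hv. symmetry.
    apply curv_eq. apply Rgt_not_eq, hv.
  - unfold Rdiv. continuity_split; try (apply continuous2_snd; assumption); try assumption.
    apply pow_nonzero. exact Hn.
Qed.

End Curve.

Section LengthFlow.
Variables (gamma : R -> R -> pt3) (T : R) (P Q : pt3).

Hypothesis smooth : forall t u, 0 <= t < T -> 0 <= u <= 1 ->
  C2_at (g1 gamma) t u /\ C2_at (g2 gamma) t u /\ C2_at (g3 gamma) t u.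
Hypothesis regular : forall t u, 0 <= t < T -> 0 <= u <= 1 -> norm_gu gamma t u <> 0.
Hypothesis fixed_ends : forall t, 0 <= t < T -> gamma t 0 = P /\ gamma t 1 = Q.
Hypothesis flow : forall t u, 0 < t < T -> 0 < u < 1 ->
  gamma_t gamma t u =
  vsub (vadd (vscal (curv gamma t u) (Nrm gamma t u))
             (vscal (lam gamma t) (Nrm gamma t u)))
       (vscal (RInt (fun xi => (curv gamma t xi + lam gamma t) * norm_gu gamma t xi) 0 u)
              (X3 (gamma t u))).

Lemma continuous_norm_gu_u t u : 0 <= t < T -> 0 <= u <= 1 ->
  continuous (norm_gu gamma t) u.
Proof.
  intros ht hu. destruct (smooth t u ht hu) as (C1 & C2 & _).
  exact (continuous2_snd _ _ _ (continuous2_norm_gu gamma t u C1 C2)).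
Qed.

Lemma is_derive_Len t : 0 < t < T ->
  is_derive (Len gamma) t (RInt (norm_gu_t gamma t) 0 1).
Proof.
  intros ht.
  rewrite (RInt_ext _ (fun u => Derive (fun s => norm_gu gamma s u) t)).
  2:{ rewrite Rmin_left, Rmax_right by lra. intros u hu.
      destruct (smooth t u ltac:(lra) ltac:(lra)) as (C1 & C2 & _).
      apply C2_at_ex_derive in C1 as (_ & _ & _ & _ & ? & _).
      apply C2_at_ex_derive in C2 as (_ & _ & _ & _ & ? & _).
      symmetry. apply is_derive_unique, is_derive_norm_gu_t; try assumption.
      apply regular; lra. }
  apply (is_derive_RInt_param (norm_gu gamma)); rewrite ?Rmin_left, ?Rmax_right by lra.
  - generalize (locally_open_interval 0 T t ht). apply filter_imp.
    intros s hs u hu. destruct (smooth s u ltac:(lra) hu) as (C1 & C2 & _).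
    apply C2_at_ex_derive in C1 as (_ & _ & _ & _ & ? & _).
    apply C2_at_ex_derive in C2 as (_ & _ & _ & _ & ? & _).
    eexists. apply is_derive_norm_gu_t; try assumption. apply regular; lra.
  - intros u hu. destruct (smooth t u ltac:(lra) hu) as (C1 & C2 & _).
    apply continuity_2d_pt_Derive_norm_gu; try assumption. apply regular; lra.
  - generalize (locally_open_interval 0 T t ht). apply filter_imp.
    intros s hs. apply ex_RInt_01. intros u hu. apply continuous_norm_gu_u; lra.
Qed.

Lemma dt_horizontal_eq0_of_fixed w X t : 0 < t < T ->
  (forall s, 0 <= s < T -> gamma s w = X) ->
  dt (g1 gamma) t w = 0 /\ dt (g2 gamma) t w = 0.
Proof.
  intros ht fixed. split; [apply (dt_eq0_of_locally_const _ _ _ (Defs.c1 X)) |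
                           apply (dt_eq0_of_locally_const _ _ _ (Defs.c2 X))];
    generalize (locally_open_interval 0 T t ht); apply filter_imp;
    intros s hs; unfold g1, g2; rewrite fixed by lra; reflexivity.
Qed.

Lemma RInt_tangential_u t : 0 < t < T -> RInt (tangential_u gamma t) 0 1 = 0.
Proof.
  intros ht.
  destruct (dt_horizontal_eq0_of_fixed 0 P t ht) as [e1 e2].
  { intros s hs. apply fixed_ends, hs. }
  destruct (dt_horizontal_eq0_of_fixed 1 Q t ht) as [f1 f2].
  { intros s hs. apply fixed_ends, hs. }
  assert (ftc : is_RInt (tangential_u gamma t) 0 1
                  (minus (tangential gamma t 1) (tangential gamma t 0))).
  { apply (is_RInt_derive (V := R_CompleteNormedModule));
      rewrite Rmin_left, Rmax_right by lra; intros u hu;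
      destruct (smooth t u ltac:(lra) hu) as (C1 & C2 & _);
      assert (Hn : norm_gu gamma t u <> 0) by (apply regular; lra).
    - now apply is_derive_tangential.
    - now apply continuous2_snd, continuous2_tangential_u. }
  rewrite (is_RInt_unique _ _ _ _ ftc). unfold tangential.
  rewrite e1, e2, f1, f2. unfold minus, plus, opp. simpl. unfold Rdiv. ring.
Qed.

Lemma flow_horizontal t u : 0 < t < T -> 0 < u < 1 ->
  dt (g1 gamma) t u =
    - (curv gamma t u + lam gamma t) * du (g2 gamma) t u / norm_gu gamma t u /\
  dt (g2 gamma) t u =
    (curv gamma t u + lam gamma t) * du (g1 gamma) t u / norm_gu gamma t u.
Proof.
  intros ht hu. assert (Hn : norm_gu gamma t u <> 0) by (apply regular; lra).
  change (dt (g1 gamma) t u) with (Defs.c1 (gamma_t gamma t u)).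
  change (dt (g2 gamma) t u) with (Defs.c2 (gamma_t gamma t u)).
  rewrite (flow t u ht hu). unfold Nrm, X3, vsub, vadd, vscal, Defs.c1, Defs.c2. simpl.
  split; field; exact Hn.
Qed.

Lemma norm_gu_t_flow t u : 0 < t < T -> 0 < u < 1 ->
  norm_gu_t gamma t u =
  tangential_u gamma t u - (curv gamma t u + lam gamma t) * curv gamma t u * norm_gu gamma t u.
Proof.
  intros ht hu.
  destruct (smooth t u ltac:(lra) ltac:(lra)) as (C1 & C2 & _).
  assert (Hn : norm_gu gamma t u <> 0) by (apply regular; lra).
  destruct (flow_horizontal t u ht hu) as [h1 h2].
  unfold norm_gu_t, tangential_u.
  rewrite (C2_at_dt_du _ _ _ C1), (C2_at_dt_du _ _ _ C2), h1, h2, curv_eq by exact Hn.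
  field. exact Hn.
Qed.

Lemma RInt_norm_gu_t_nonpos t : 0 < t < T -> RInt (norm_gu_t gamma t) 0 1 <= 0.
Proof.
  intros ht.
  set (k := curv gamma t). set (w := norm_gu gamma t). set (l := lam gamma t).
  assert (ck : forall u, 0 <= u <= 1 -> continuous k u).
  { intros u hu. destruct (smooth t u ltac:(lra) hu) as (C1 & C2 & _).
    apply continuous_curv; [assumption | assumption | apply regular; lra]. }
  assert (cw : forall u, 0 <= u <= 1 -> continuous w u).
  { intros u hu. apply continuous_norm_gu_u; lra. }
  assert (int_tangential : ex_RInt (tangential_u gamma t) 0 1).
  { apply ex_RInt_01. intros u hu. destruct (smooth t u ltac:(lra) hu) as (C1 & C2 & _).
    apply continuous2_snd, continuous2_tangential_u; [assumption | assumption |].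
    apply regular; lra. }
  assert (int_kkw : ex_RInt (fun u => (k u + l) * k u * w u) 0 1).
  { apply ex_RInt_01. intros u hu. continuity_split; auto. }
  rewrite (RInt_ext _ (fun u => minus (tangential_u gamma t u) ((k u + l) * k u * w u))).
  2:{ rewrite Rmin_left, Rmax_right by lra. intros u hu.
      rewrite norm_gu_t_flow by lra. reflexivity. }
  rewrite (RInt_minus (V := R_CompleteNormedModule)) by assumption.
  rewrite RInt_tangential_u by exact ht.
  rewrite (RInt_weighted_centered k w 0 1 l).
  - assert (0 <= RInt (fun u => (k u + l) ^ 2 * w u) 0 1).
    { apply RInt_ge_0; [lra | apply ex_RInt_01; intros u hu; continuity_split; auto |].
      intros u hu. apply Rmult_le_pos; [apply pow2_ge_0 | apply sqrt_pos]. }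
    unfold minus, plus, opp. simpl in *. lra.
  - apply ex_RInt_01. intros u hu. continuity_split; auto.
  - apply ex_RInt_01. intros u hu. continuity_split; auto.
  - apply ex_RInt_01. exact cw.
  - reflexivity.
Qed.

Lemma Len_right_continuous_0 : 0 < T -> forall eps : posreal, exists d : posreal,
  forall s, 0 <= s <= 0 + d -> s < T -> Rabs (Len gamma s - Len gamma 0) <= eps.
Proof.
  intros hT eps.
  destruct (RInt_param_close (norm_gu gamma) 0 1 0) with (eps := eps) as [d close].
  { lra. }
  { intros u hu. destruct (smooth 0 u ltac:(lra) hu) as (C1 & C2 & _).
    now apply continuous2_norm_gu. }
  exists d. intros s hs hsT. replace (pos eps) with ((1 - 0) * eps) by ring.
  unfold Len. apply close.
  - rewrite Rminus_0_r, Rabs_right; lra.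
  - apply ex_RInt_01. intros u hu. apply continuous_norm_gu_u; lra.
  - apply ex_RInt_01. intros u hu. apply continuous_norm_gu_u; lra.
Qed.

End LengthFlow.

Theorem lemmaB3 (P Q : pt3) (T : R) (gamma : R -> R -> pt3) :
  P <> Q ->
  (* sufficiently smooth: each component is C^2 (up to the boundary)
     on [0,T) x [0,1] *)
  (forall t u, 0 <= t < T -> 0 <= u <= 1 ->
     C2_at (g1 gamma) t u /\ C2_at (g2 gamma) t u /\ C2_at (g3 gamma) t u) ->
  (* |gamma_u|_g <> 0 everywhere *)
  (forall t u, 0 <= t < T -> 0 <= u <= 1 -> norm_gu gamma t u <> 0) ->
  (* gamma(0,.) is a regular horizontal curve from P to Q *)
  (forall u, 0 <= u <= 1 -> horizontal_at gamma 0 u) ->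
  gamma 0 0 = P -> gamma 0 1 = Q ->
  (* fixed endpoints *)
  (forall t, 0 <= t < T -> gamma t 0 = P /\ gamma t 1 = Q) ->
  (* the flow *)
  (forall t u, 0 < t < T -> 0 < u < 1 ->
     gamma_t gamma t u =
     vsub (vadd (vscal (curv gamma t u) (Nrm gamma t u))
                (vscal (lam gamma t) (Nrm gamma t u)))
          (vscal (RInt (fun xi => (curv gamma t xi + lam gamma t) * norm_gu gamma t xi) 0 u)
                 (X3 (gamma t u)))) ->
  forall t1 t2, 0 <= t1 -> t1 <= t2 -> t2 < T ->
    Len gamma t2 <= Len gamma t1.
Proof.
  intros _ smooth regular _ _ _ fixed_ends flow t1 t2 ht1 ht12 ht2.
  apply (nonincreasing_right_closed (Len gamma) 0 T); try assumption.
  - apply (nonincreasing_of_derive_nonpos _ (fun t => RInt (norm_gu_t gamma t) 0 1)).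
    + exact (is_derive_Len gamma T smooth regular).
    + exact (RInt_norm_gu_t_nonpos gamma T P Q smooth regular fixed_ends flow).
  - apply (Len_right_continuous_0 gamma T smooth). lra.
Qed.
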